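(* Let $S$ be an inductive left $E$-monoid. Then $E$ is a maximal right pre-reduced subset of $E(S)$ if and only if $Rest(E,S)$ has precisely enough large idempotents. If moreover $S$ is integral with zero and $0\in E$, then $E$ is maximal right pre-reduced if and only if $Rest_0(E,S)$ has precisely enough large idempotents.
   Context: For a semigroup $S$, $E(S)$ is its set of idempotents; for $e,f\in E(S)$, $e\le_r f$ iff $e=ef$, and $e\sim_r f$ iff $e\le_r f$ and $f\le_r e$. $E\subseteq E(S)$ is right pre-reduced if $e=ef$ and $f=fe$ imply $e=f$ for $e,f\in E$; it is maximal right pre-reduced if it contains exactly one element of each $\sim_r$-class of $E(S)$. A monoid with zero is integral if $st=0$ implies $s=0$ or $t=0$. Let $S$ be a monoid and $1\in E\subseteq E(S)$. $S$ is an inductive left $E$-monoid if $E$ is right pre-reduced, $(E,\le_r)$ is a meet-semilattice with meet $\wedge$, and (I1') for all $t\in S$, $e\in E$ there is $t\cdot e\in E$ such that for all $s\in S$: $ste=st$ iff $s(t\cdot e)=s$; (I2') for $s\in S$, $e,f\in E$: $se=sf=s$ implies $s(e\wedge f)=s$. $Rest(E,S)$ is $C_E(S)=\{(e,s)\in E\times S\mid es=s\}$ with $(e,s)(f,t)=(e\wedge(s\cdot f),(e\wedge(s\cdot f))st)$ and $D((e,s))=(e,e)$; if $S$ is integral with zero and $0\in E$, $Rest_0(E,S)$ is the subset $C^0_E(S)=\{(e,s)\in C_E(S)\mid s=0\Rightarrow e=0\}$ with the same operations. A left restriction semigroup is a semigroup with unary $D$ satisfying $D(x)x=x$, $D(x)D(y)=D(y)D(x)$,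 $D(D(x)y)=D(x)D(y)$, $xD(y)=D(xy)x$. For a left restriction monoid $M$, $M_1=\{s\in M\mid D(s)=1\}$; a zero of $M$ is a semigroup zero $0$ with $D(0)=0$. $M$ has enough large idempotents if for every $e\in D(M)$ other than a zero of $M$ there is $f\in E(M_1)$ with $e\sim_r f$; it has precisely enough large idempotents if in addition for every $f\in E(M_1)$ there is $e\in D(M)$ with $e\sim_r f$. *)

Set Implicit Arguments.

Section Defs.
Variable S : Type.
Variable mul : S -> S -> S.
Variable one : S.

Definition is_monoid : Prop :=
  (forall a b c, mul a (mul b c) = mul (mul a b) c) /\
  (forall a, mul one a = a) /\ (forall a, mul a one = a).

Definition idem (x : S) : Prop := mul x x = x.

Definition le_r (e f : S) : Prop := e = mul e f.
Definition sim_r (e f : S) : Prop := le_r e f /\ le_r f e.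

Definition right_pre_reduced (E : S -> Prop) : Prop :=
  forall e f, E e -> E f -> e = mul e f -> f = mul f e -> e = f.

Definition max_right_pre_reduced (E : S -> Prop) : Prop :=
  (forall e, E e -> idem e) /\
  (forall x, idem x -> exists e, E e /\ sim_r e x /\
     forall e', E e' -> sim_r e' x -> e' = e).

(* S is an inductive left E-monoid, with meet [meet] on (E, <=_r)
   and the operation t.e given by [dot]. *)
Record inductive_left_E_monoid (E : S -> Prop) (meet : S -> S -> S)
    (dot : S -> S -> S) : Prop := {
  ilm_sub : forall e, E e -> idem e;
  ilm_one : E one;
  ilm_prr : right_pre_reduced E;
  ilm_meet_E : forall e f, E e -> E f -> E (meet e f);
  ilm_meet_l : forall e f, E e -> E f -> le_r (meet e f) e;
  ilm_meet_r : forall e f, E e -> E f -> le_r (meet e f) f;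
  ilm_meet_glb : forall e f g, E e -> E f -> E g ->
      le_r g e -> le_r g f -> le_r g (meet e f);
  ilm_I1_E : forall t e, E e -> E (dot t e);
  ilm_I1 : forall t e, E e -> forall s,
      mul (mul s t) e = mul s t <-> mul s (dot t e) = s;
  ilm_I2 : forall s e f, E e -> E f -> mul s e = s -> mul s f = s ->
      mul s (meet e f) = s
}.

Definition is_zero (z : S) : Prop := forall s, mul z s = z /\ mul s z = z.
Definition integral (z : S) : Prop :=
  forall s t, mul s t = z -> s = z \/ t = z.

Definition C_E (E : S -> Prop) (p : S * S) : Prop :=
  E (fst p) /\ mul (fst p) (snd p) = snd p.
Definition C0_E (E : S -> Prop) (z : S) (p : S * S) : Prop :=
  C_E E p /\ (snd p = z -> fst p = z).
Definition rest_mul (meet dot : S -> S -> S) (p q : S * S) : S * S :=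
  let g := meet (fst p) (dot (snd p) (fst q)) in
  (g, mul g (mul (snd p) (snd q))).
Definition rest_D (p : S * S) : S * S := (fst p, fst p).
Definition rest_one : S * S := (one, one).
End Defs.

(* Generic notions for a left restriction monoid presented as a carrier
   predicate P on a type T, multiplication m, unary D and identity u. *)
Section LRM.
Variable T : Type.
Variables (P : T -> Prop) (m : T -> T -> T) (D : T -> T) (u : T).

Definition M_idem (x : T) : Prop := P x /\ m x x = x.
Definition M_sim_r (e f : T) : Prop := e = m e f /\ f = m f e.
Definition in_DM (e : T) : Prop := exists x, P x /\ e = D x.
Definition in_EM1 (f : T) : Prop := M_idem f /\ D f = u.
Definition M_zero (z : T) : Prop :=
  P z /\ (forall x, P x -> m z x = z /\ m x z = z) /\ D z = z.

Definition enough_large_idempotents : Prop :=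
  forall e, in_DM e -> ~ M_zero e -> exists f, in_EM1 f /\ M_sim_r e f.
Definition precisely_enough_large_idempotents : Prop :=
  enough_large_idempotents /\
  (forall f, in_EM1 f -> exists e, in_DM e /\ M_sim_r e f).
End LRM.

(* Inside Rest(E,S) the projection D(M) consists of the pairs (e,e), e in E,
   and the large idempotents E(M_1) are the pairs (1,s) with s idempotent in S.
   The key computation (rest_sim_r) is that (e,e) ~_r (1,s) in Rest(E,S)
   exactly when e ~_r s in S; it rests on axiom (I1'), which makes s.e = 1
   equivalent to s e = s.  Hence "every idempotent of S is ~_r-related to an
   element of E" is the same as "every large idempotent of Rest(E,S) is
   ~_r-related to an element of D(M)", and uniqueness of the representative is
   automatic because E is right pre-reduced.

   We prove one equivalence (max_rpr_iff_precisely) for any carrier P of pairs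
   between {(e,e)} and C_E(S), parametrised by two side conditions that
   describe which pairs (1,s) belong to P.  Rest(E,S) satisfies them outright;
   Rest_0(E,S) does so because (0,0) is a zero of it (rest0_zero), and the
   only idempotent s with (1,s) missing from C^0_E(S) is s = 0. *)
From Stdlib Require Import Classical.
Set Implicit Arguments.

Lemma sim_r_common (S : Type) (mul : S -> S -> S) (one : S) :
  is_monoid mul one ->
  forall e x f, sim_r mul e x -> sim_r mul f x -> sim_r mul e f.
Proof.
  intros [Hassoc _] e x f [Hex Hxe] [Hfx Hxf]; unfold le_r in *; split.
  - transitivity (mul e (mul x f)); [rewrite <- Hxf; exact Hex |].
    rewrite Hassoc, <- Hex; reflexivity.
  - transitivity (mul f (mul x e)); [rewrite <- Hxe; exact Hfx |].
    rewrite Hassoc, <- Hfx; reflexivity.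
Qed.

Section RestMonoid.
Variables (S : Type) (mul : S -> S -> S) (one : S).
Variables (E : S -> Prop) (meet dot : S -> S -> S).
Hypothesis Hmon : is_monoid mul one.
Hypothesis Hind : inductive_left_E_monoid mul one E meet dot.

Local Notation rmul := (rest_mul mul meet dot).
Local Notation runit := (rest_one one).

(* t.1 = 1, since every s satisfies s t 1 = s t. *)
Lemma dot_one (t : S) : dot t one = one.
Proof.
  destruct Hmon as [_ [Hl Hr]].
  rewrite <- (Hl (dot t one)).
  apply (ilm_I1 Hind t one (ilm_one Hind) one).
  rewrite Hl, Hr; reflexivity.
Qed.

(* 1 is the top of (E, <=_r), so it is a unit for the meet on both sides. *)
Lemma meet_one (e : S) : E e -> meet e one = e /\ meet one e = e.
Proof.
  destruct Hmon as [_ [Hl Hr]]; intro He.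
  pose proof (ilm_one Hind) as H1.
  pose proof (ilm_sub Hind e He) as Hee; unfold idem in Hee.
  assert (Hle1 : le_r mul e one) by (unfold le_r; rewrite Hr; reflexivity).
  assert (Hlee : le_r mul e e) by (unfold le_r; rewrite Hee; reflexivity).
  pose proof (ilm_meet_E Hind) as HmE.
  split; apply (ilm_prr Hind); auto.
  - apply (ilm_meet_l Hind); auto.
  - apply (ilm_meet_glb Hind); auto.
  - apply (ilm_meet_r Hind); auto.
  - apply (ilm_meet_glb Hind); auto.
Qed.

Lemma rest_one_idem (s : S) : rmul (one, s) (one, s) = (one, s) <-> idem mul s.
Proof.
  destruct Hmon as [_ [Hl _]]; unfold rest_mul, idem; simpl.
  rewrite dot_one, (proj1 (meet_one (ilm_one Hind))), Hl.
  split; [intro K; injection K; auto | intros ->; reflexivity].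
Qed.

Lemma rest_sim_r (e s : S) :
  E e -> M_sim_r rmul (e, e) (one, s) <-> sim_r mul e s.
Proof.
  destruct Hmon as [Hassoc [Hl _]]; intro He.
  pose proof (ilm_sub Hind e He) as Hee; unfold idem in Hee.
  pose proof (ilm_I1 Hind s e He one) as Hdot; rewrite !Hl in Hdot.
  unfold M_sim_r, rest_mul, sim_r, le_r; simpl.
  rewrite dot_one, (proj1 (meet_one He)),
    (proj2 (meet_one (ilm_I1_E Hind s e He))), Hassoc, Hee.
  split.
  - intros [A B]; injection A; injection B; intros Hs Hdot1 He'.
    split; [exact He' | symmetry; apply Hdot; symmetry; exact Hdot1].
  - intros [A B].
    assert (Hdot1 : dot s e = one) by (apply Hdot; auto).
    rewrite Hdot1, Hl, <- A, <- B; auto.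
Qed.

(* Since E is right pre-reduced, E is maximal right pre-reduced as soon as
   every idempotent has some ~_r-representative in E. *)
Lemma max_rpr_of_representatives :
  (forall x, idem mul x -> exists e, E e /\ sim_r mul e x) ->
  max_right_pre_reduced mul E.
Proof.
  intros Hrep; split; [exact (ilm_sub Hind) |].
  intros x Hx; destruct (Hrep x Hx) as [e [He Hex]].
  exists e; repeat split; try apply Hex; auto.
  intros f Hf Hfx; destruct (sim_r_common Hmon Hfx Hex) as [A B].
  apply (ilm_prr Hind); auto.
Qed.

(* The general equivalence, for any carrier P of pairs with first coordinate
   in E that contains the diagonal {(e,e) | e in E}; the last two hypotheses
   say that a pair (1,s) may be missing from P only when (s,s) is a zero of P
   or when s already has a representative in E. *)
Lemma max_rpr_iff_precisely (P : S * S -> Prop) :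
  (forall p, P p -> E (fst p)) ->
  (forall e, E e -> P (e, e)) ->
  (forall g, E g -> ~ M_zero P rmul (@rest_D S) (g, g) -> P (one, g)) ->
  (forall x, idem mul x -> P (one, x) \/ exists e, E e /\ sim_r mul e x) ->
  (max_right_pre_reduced mul E <->
     precisely_enough_large_idempotents P rmul (@rest_D S) runit).
Proof.
  intros HPE HPdiag HPlarge HPrep.
  assert (Hlarge : forall s, P (one, s) -> idem mul s ->
            in_EM1 P rmul (@rest_D S) runit (one, s)).
  { intros s Ps Hs; repeat split; auto; apply rest_one_idem; exact Hs. }
  split.
  - intros [_ Hmax]; split.
    + intros d [[g t] [Pgt ->]] Hnz; simpl in *.
      pose proof (HPE _ Pgt) as Hg; simpl in Hg.
      pose proof (ilm_sub Hind g Hg) as Hgg; unfold idem in Hgg.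
      exists (one, g); split; [apply Hlarge; auto |].
      apply rest_sim_r; auto; split; unfold le_r; auto.
    + intros [e s] [[Pes Hidem] HD]; injection HD; intros _ He; subst e.
      apply rest_one_idem in Hidem.
      destruct (Hmax s Hidem) as [g [Hg [Hgs _]]].
      exists (g, g); split; [exists (g, g); auto | apply rest_sim_r; auto].
  - intros [_ Hprec]; apply max_rpr_of_representatives.
    intros x Hx; destruct (HPrep x Hx) as [Px | Hrep]; [| exact Hrep].
    destruct (Hprec (one, x) (Hlarge x Px Hx)) as [d [[[g t] [Pgt ->]] Hsim]].
    simpl in *; exists g; split; [exact (HPE _ Pgt) |].
    apply rest_sim_r; auto; exact (HPE _ Pgt).
Qed.

(* In Rest_0(E,S), the pair (0,0) is a zero: a meet below 0 is 0, and
   integrality forces the relevant meet below 0. *)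
Lemma rest0_zero (z : S) :
  is_zero mul z -> integral mul z -> E z ->
  M_zero (C0_E mul E z) rmul (@rest_D S) (z, z).
Proof.
  intros Hz Hint Ez.
  assert (Hbelow : forall e f, le_r mul (meet e f) z -> meet e f = z).
  { intros e f L; unfold le_r in L; rewrite L; apply Hz. }
  split; [split; [split; [exact Ez | apply Hz] | auto] |].
  split; [| reflexivity].
  intros [e s] [[Ee Hes] Hsz]; unfold rest_mul; simpl in *; split.
  - assert (Ed : E (dot z e)) by exact (ilm_I1_E Hind z e Ee).
    rewrite (Hbelow z (dot z e)) by (apply (ilm_meet_l Hind); auto).
    rewrite (proj1 (Hz _)); reflexivity.
  - assert (Ed : E (dot s z)) by exact (ilm_I1_E Hind s z Ez).
    (* by (I1'), (s.0) s 0 = (s.0) s since s.0 is idempotent, so (s.0) s = 0 *)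
    assert (Hs0 : mul (dot s z) s = z).
    { pose proof (proj2 (ilm_I1 Hind s z Ez (dot s z)) (ilm_sub Hind _ Ed)) as K.
      rewrite (proj2 (Hz _)) in K; symmetry; exact K. }
    rewrite (Hbelow e (dot s z)).
    + rewrite (proj1 (Hz _)); reflexivity.
    + destruct (Hint _ _ Hs0) as [Hd | Hs].
      * rewrite Hd in Ed |- *; apply (ilm_meet_r Hind); auto.
      * rewrite (Hsz Hs) in Ee |- *; apply (ilm_meet_l Hind); auto.
Qed.

End RestMonoid.

Theorem proposition4p4 (S : Type) (mul : S -> S -> S) (one : S)
    (E : S -> Prop) (meet dot : S -> S -> S) :
  is_monoid mul one ->
  inductive_left_E_monoid mul one E meet dot ->
  (max_right_pre_reduced mul E <->
     precisely_enough_large_idempotents (C_E mul E) (rest_mul mul meet dot)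
       (@rest_D S) (rest_one one)) /\
  (forall z : S, is_zero mul z -> integral mul z -> E z ->
     (max_right_pre_reduced mul E <->
        precisely_enough_large_idempotents (C0_E mul E z)
          (rest_mul mul meet dot) (@rest_D S) (rest_one one))).
Proof.
  intros Hmon Hind.
  pose proof Hmon as [_ [Hl _]].
  pose proof (ilm_one Hind) as E1.
  assert (Hdiag : forall e, E e -> C_E mul E (e, e)).
  { intros e He; split; [exact He | apply (ilm_sub Hind e He)]. }
  split.
  - apply (max_rpr_iff_precisely Hmon Hind).
    + intros p Hp; apply Hp.
    + exact Hdiag.
    + intros g _ _; split; [exact E1 | apply Hl].
    + intros x _; left; split; [exact E1 | apply Hl].
  - intros z Hz Hint Ez.
    pose proof (rest0_zero Hind Hz Hint Ez) as Hzero.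
    apply (max_rpr_iff_precisely Hmon Hind).
    + intros p Hp; apply Hp.
    + intros e He; split; auto.
    + (* (0,0) is a zero, so a non-zero diagonal pair has g <> 0 *)
      intros g _ Hnz; split; [split; [exact E1 | apply Hl] |].
      simpl; intros ->; contradiction.
    + (* only s = 0 is missing among the pairs (1,s), and 0 represents itself *)
      intros x Hx; destruct (classic (x = z)) as [-> | Hxz].
      * right; exists z; split; [exact Ez | split; unfold le_r; symmetry; apply Hz].
      * left; split; [split; [exact E1 | apply Hl] | simpl; intro; contradiction].
Qed.
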